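(* Let $\mathbb{X}$ be a finite subset of the projective space $\mathbb{P}^{s-1}$ over a field $K$, let $I(\mathbb{X})\subset S=K[t_1,\ldots,t_s]$ be its vanishing ideal, and let $\prec$ be a monomial order on $S$. If $0\neq f\in S$ is homogeneous and $(I(\mathbb{X})\colon f)\neq I(\mathbb{X})$, then $$|V_{\mathbb{X}}(f)|=\deg(S/(I(\mathbb{X}),f))\leq\deg(S/(\mathrm{in}_\prec(I(\mathbb{X})),\mathrm{in}_\prec(f)))\leq\deg(S/I(\mathbb{X})),$$ and $\deg(S/(I(\mathbb{X}),f))<\deg(S/I(\mathbb{X}))$ if $f\notin I(\mathbb{X})$.
   Context: $I(\mathbb{X})$ is the ideal generated by all homogeneous polynomials vanishing at every point of $\mathbb{X}$; $V_{\mathbb{X}}(f)$ is the set of points of $\mathbb{X}$ where $f$ vanishes. $(I\colon f)=\{h\in S: hf\in I\}$. $\mathrm{in}_\prec(f)$ is the leading monomial of $f$, $\mathrm{in}_\prec(I)$ the initial ideal. For a graded ideal $J$ with Hilbert function $H_J(d)=\dim_K(S_d/J_d)$ and $k=\dim(S/J)$, $\deg(S/J)=(k-1)!\lim_{d\to\infty}H_J(d)/d^{k-1}$ if $k\geq 1$ and $\dim_K(S/J)$ if $k=0$. *)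

From HB Require Import structures.
From mathcomp Require Import all_boot all_order all_algebra.
From mathcomp Require Import mpoly.
From Stdlib Require Import ClassicalEpsilon.

Set Implicit Arguments.
Unset Strict Implicit.
Unset Printing Implicit Defensive.

Import Order.TTheory GRing.Theory Num.Theory.
Local Open Scope ring_scope.

Section Defs.
Variables (K : fieldType) (s : nat).
Local Notation S := {mpoly K[s]}.

Definition gen_ideal (G : S -> Prop) : S -> Prop :=
  fun f => exists (hs gs : seq S),
    size hs = size gs /\ (forall g, g \in gs -> G g) /\
    f = \sum_(i < size gs) hs`_i * gs`_i.

Definition ideal_add (J : S -> Prop) (f : S) : S -> Prop :=
  gen_ideal (fun g => J g \/ g = f).

Definition colon (J : S -> Prop) (f : S) : S -> Prop := fun h => J (h * f).

Definition homogeneous (f : S) : Prop := exists d : nat, f \is d.-homog.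

(* Points of P^{s-1} are given by (nonzero) representatives in K^s. *)
Definition point := {ffun 'I_s -> K}.

Definition proj_finite_set (X : seq point) : Prop :=
  (forall x, x \in X -> x != [ffun=> 0]) /\
  (forall i j, (i < size X)%N -> (j < size X)%N -> i <> j ->
     ~ exists c : K, forall k, (nth [ffun=> 0] X i) k = c * (nth [ffun=> 0] X j) k).

Definition vanishing_ideal (X : seq point) : S -> Prop :=
  gen_ideal (fun g => homogeneous g /\ forall x, x \in X -> g.@[x] = 0).

Definition card_zeros (X : seq point) (f : S) : nat :=
  count (fun x : point => f.@[x] == 0) X.

Record monomial_order := MonomialOrder {
  mle : rel 'X_{1..s};
  mle_refl : reflexive mle;
  mle_anti : antisymmetric mle;
  mle_trans : transitive mle;
  mle_total : total mle;
  mle_0 : forall m, mle 0%MM m;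
  mle_add : forall m1 m2 m3, mle m1 m2 -> mle (m1 + m3)%MM (m2 + m3)%MM
}.

Definition lead_mnm (o : monomial_order) (f : S) : 'X_{1..s} :=
  foldr (fun m acc => if mle o acc m then m else acc) 0%MM (msupp f).

Definition in_poly (o : monomial_order) (f : S) : S := 'X_[lead_mnm o f].

Definition in_ideal (o : monomial_order) (J : S -> Prop) : S -> Prop :=
  gen_ideal (fun g => exists f, J f /\ f != 0 /\ g = in_poly o f).

Definition indep_mod (J : S -> Prop) (ps : seq S) : Prop :=
  forall cs : seq K, size cs = size ps ->
    J (\sum_(i < size ps) cs`_i *: ps`_i) -> forall i, cs`_i = 0.

(* dim_K (V / (J cap V)) for V a subspace: the maximal size of a family in V
   linearly independent modulo J (chosen classically). *)
Definition is_qdim (V : S -> Prop) (J : S -> Prop) (n : nat) : Prop :=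
  (exists ps : seq S, size ps = n /\ (forall p, p \in ps -> V p) /\ indep_mod J ps) /\
  (forall ps : seq S, (forall p, p \in ps -> V p) -> indep_mod J ps -> (size ps <= n)%N).

Definition qdim (V : S -> Prop) (J : S -> Prop) : nat :=
  epsilon (inhabits 0%N) (is_qdim V J).

Definition hilbert_fun (J : S -> Prop) (d : nat) : nat :=
  qdim (fun p => p \is d.-homog) J.

Definition is_ideal (P : S -> Prop) : Prop :=
  P 0 /\ (forall a b, P a -> P b -> P (a + b)) /\ (forall a b, P b -> P (a * b)).

Definition is_prime_ideal (P : S -> Prop) : Prop :=
  is_ideal P /\ ~ P 1 /\ (forall a b, P (a * b) -> P a \/ P b).

Definition strict_incl (P Q : S -> Prop) : Prop :=
  (forall a, P a -> Q a) /\ exists a, Q a /\ ~ P a.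

(* a chain P_0 < P_1 < ... < P_k of primes containing J, of length k *)
Definition prime_chain (J : S -> Prop) (Ps : seq (S -> Prop)) : Prop :=
  (forall i, (i < size Ps)%N -> is_prime_ideal (nth J Ps i) /\
                               forall a, J a -> nth J Ps i a) /\
  (forall i, (i.+1 < size Ps)%N -> strict_incl (nth J Ps i) (nth J Ps i.+1)).

Definition is_krull_dim (J : S -> Prop) (k : nat) : Prop :=
  (exists Ps, prime_chain J Ps /\ size Ps = k.+1) /\
  (forall Ps, prime_chain J Ps -> (size Ps <= k.+1)%N).

Definition krull_dim (J : S -> Prop) : nat :=
  epsilon (inhabits 0%N) (is_krull_dim J).

Definition converges (a : nat -> rat) (l : rat) : Prop :=
  forall eps : rat, 0 < eps -> exists N : nat, forall d, (N <= d)%N -> `|a d - l| < eps.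

Definition limq (a : nat -> rat) : rat := epsilon (inhabits 0) (converges a).

Definition deg (J : S -> Prop) : rat :=
  match krull_dim J with
  | k.+1 => (k`!)%:R * limq (fun d => (hilbert_fun J d)%:R / (d%:R ^+ k))
  | 0%N => (qdim (fun _ => True) J)%:R
  end.

End Defs.

(* For [d] large, products of linear forms separating one point of [X] from
   the others give homogeneous forms of degree [d] interpolating any values on
   [X]; they form a basis of [S_d] modulo [I(X)], and those attached to the zeros
   [V] of [f] a basis modulo [(I(X), f)], so the two Hilbert functions are
   eventually [|X|] and [|V|]. The standard monomials, those outside
   [M = (in(I(X)), in(f))], are a basis of [S_d / M_d]; they are independent
   modulo [I(X)] and, by division with respect to leading terms, span [S_d]
   modulo [(I(X), f)], so their number lies between [|V|] and [|X|]; it is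
   eventually constant because [M] contains [t_j^N t_k^N] for [j != k], with
   [N = |X|]. All three ideals have Krull dimension one: each is contained in
   the ideal of a line through the origin, every prime over it contains such a
   line ideal, and above a line ideal a chain of primes pulls back to [K[t]],
   where nonzero primes are maximal. Finally [(I(X) : f) != I(X)] forces
   [V != [::]], and [f \notin I(X)] forces [|V| < |X|]. *)

From HB Require Import structures.
From mathcomp Require Import all_boot all_order all_algebra.
From mathcomp Require Import mpoly.
From mathcomp Require Import lra zify.
From Stdlib Require Import Classical ClassicalEpsilon.

Set Implicit Arguments.
Unset Strict Implicit.
Unset Printing Implicit Defensive.

Import Order.TTheory GRing.Theory Num.Theory.
Local Open Scope ring_scope.

Section Ideals.
Variables (K : fieldType) (s : nat).
Local Notation S := {mpoly K[s]}.
Implicit Types (G J P : S -> Prop) (f g : S).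

Lemma gen_idealP G f : gen_ideal G f <->
  exists l : seq (S * S), (forall p, p \in l -> G p.2) /\ f = \sum_(p <- l) p.1 * p.2.
Proof.
split.
- move=> [hs [gs [Hsz [HG ->]]]].
  exists (zip hs gs); split.
    move=> p /(map_f snd); rewrite -/(unzip2 _) unzip2_zip ?Hsz //; exact: HG.
  rewrite (big_nth (0,0)) big_mkord size_zip Hsz minnn.
  by apply: eq_bigr => i _; rewrite nth_zip.
- move=> [l [Hl ->]]; exists (unzip1 l), (unzip2 l); rewrite !size_map; split=> //.
  split; first by move=> g /mapP [p pl ->]; exact: Hl.
  rewrite (big_nth (0,0)) big_mkord; apply: eq_bigr => i _.
  by rewrite !(nth_map (0,0)).
Qed.

Lemma gen_ideal_is_ideal G : is_ideal (gen_ideal G).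
Proof.
split; [|split].
- by apply/gen_idealP; exists [::]; rewrite big_nil.
- move=> a b /gen_idealP [la [Ha ->]] /gen_idealP [lb [Hb ->]].
  apply/gen_idealP; exists (la ++ lb); split; last by rewrite big_cat.
  by move=> p; rewrite mem_cat => /orP [/Ha|/Hb].
- move=> a b /gen_idealP [lb [Hb ->]].
  apply/gen_idealP; exists [seq (a * p.1, p.2) | p <- lb]; split.
    by move=> p /mapP [q ql ->] /=; apply: Hb.
  by rewrite big_map mulr_sumr; apply: eq_bigr => p _; rewrite mulrA.
Qed.

Lemma gen_ideal_gen G g : G g -> gen_ideal G g.
Proof.
move=> Gg; apply/gen_idealP; exists [:: (1, g)]; split.
  by move=> p; rewrite inE => /eqP ->.
by rewrite big_seq1 mul1r.
Qed.

Lemma gen_ideal_min G P : is_ideal P -> (forall g, G g -> P g) ->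
  forall f, gen_ideal G f -> P f.
Proof.
move=> [P0 [PD PM]] HG f /gen_idealP [l [Hl ->]].
elim: l Hl => [|p l IH] Hl; first by rewrite big_nil.
rewrite big_cons; apply: PD; first by apply: PM; apply: HG; apply: Hl; rewrite inE eqxx.
by apply: IH => q ql; apply: Hl; rewrite inE ql orbT.
Qed.

Lemma ideal_add_is_ideal J f : is_ideal (ideal_add J f).
Proof. exact: gen_ideal_is_ideal. Qed.

Lemma ideal_add_l J f g : J g -> ideal_add J f g.
Proof. by move=> Jg; apply: gen_ideal_gen; left. Qed.

Lemma ideal_add_r J f : ideal_add J f f.
Proof. by apply: gen_ideal_gen; right. Qed.

Lemma ideal_add_min J f P : is_ideal P -> (forall g, J g -> P g) -> P f ->
  forall g, ideal_add J f g -> P g.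
Proof. by move=> HP JP Pf; apply: gen_ideal_min => // g [/JP|->]. Qed.

Section IdealTheory.
Variable P : S -> Prop.
Hypothesis idP : is_ideal P.

Lemma ideal0 : P 0.
Proof. by case: idP. Qed.

Lemma idealD a b : P a -> P b -> P (a + b).
Proof. by case: idP => _ [PD _]; apply: PD. Qed.

Lemma idealMl a b : P b -> P (a * b).
Proof. by case: idP => _ [_ PM]; apply: PM. Qed.

Lemma idealMr a b : P a -> P (a * b).
Proof. by rewrite mulrC; apply: idealMl. Qed.

Lemma idealZ c a : P a -> P (c *: a).
Proof. by rewrite -mul_mpolyC; apply: idealMl. Qed.

Lemma idealN a : P a -> P (- a).
Proof. by rewrite -mulN1r; apply: idealMl. Qed.

Lemma idealB a b : P a -> P b -> P (a - b).
Proof. by move=> Pa Pb; apply: idealD => //; apply: idealN. Qed.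

Lemma ideal_sum (I : eqType) (r : seq I) (F : I -> S) :
  (forall i, i \in r -> P (F i)) -> P (\sum_(i <- r) F i).
Proof.
elim: r => [|i r IH] HF; first by rewrite big_nil; apply: ideal0.
rewrite big_cons; apply: idealD; first by apply: HF; rewrite inE eqxx.
by apply: IH => j jr; apply: HF; rewrite inE jr orbT.
Qed.

Lemma ideal_monomials p : (forall m, m \in msupp p -> P 'X_[m]) -> P p.
Proof. by move=> H; rewrite (mpolyE p); apply: ideal_sum => m /H; apply: idealZ. Qed.

Lemma ideal_congM a a' b b' : P (a - a') -> P (b - b') -> P (a * b - a' * b').
Proof.
move=> Ha Hb; have -> : a * b - a' * b' = a * (b - b') + (a - a') * b'.
  by rewrite mulrBr mulrBl addrA subrK.
by apply: idealD; [apply: idealMl | apply: idealMr].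
Qed.

Lemma ideal_congX a a' n : P (a - a') -> P (a ^+ n - a' ^+ n).
Proof.
move=> H; elim: n => [|n IH]; first by rewrite !expr0 subrr; apply: ideal0.
by rewrite !exprS; apply: ideal_congM.
Qed.

Lemma ideal_congP (T : Type) (r : seq T) (F G : T -> S) :
  (forall i, P (F i - G i)) -> P (\prod_(i <- r) F i - \prod_(i <- r) G i).
Proof.
move=> H; elim: r => [|a r IH]; first by rewrite !big_nil subrr; apply: ideal0.
by rewrite !big_cons; apply: ideal_congM.
Qed.

End IdealTheory.

Lemma prime_prod P (I : eqType) (r : seq I) (F : I -> S) :
  is_prime_ideal P -> P (\prod_(i <- r) F i) -> exists2 i, i \in r & P (F i).
Proof.
move=> [_ [nP1 Pm]]; elim: r => [|i r IH]; first by rewrite big_nil.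
rewrite big_cons => /Pm [Pi|/IH [j jr Pj]]; first by exists i; rewrite ?inE ?eqxx.
by exists j; rewrite // inE jr orbT.
Qed.

Lemma prime_exp P a n : is_prime_ideal P -> P (a ^+ n) -> P a.
Proof.
move=> HP; elim: n => [|n IH]; first by rewrite expr0 => H; case: HP => _ [].
by rewrite exprS; case: (HP) => _ [_ Pm] /Pm [//|/IH].
Qed.

Lemma zeros_is_ideal (v : 'I_s -> K) : is_ideal (fun p : S => p.@[v] = 0).
Proof.
split; first by rewrite meval0.
by split=> [a b Ha Hb|a b Hb]; rewrite ?mevalD ?mevalM Hb ?Ha ?addr0 ?mulr0.
Qed.

End Ideals.

Section LinearAlgebra.
Variables (K : fieldType) (s : nat).
Local Notation S := {mpoly K[s]}.
Implicit Types (J V : S -> Prop) (B : seq S).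

Definition in_span_mod J B p : Prop :=
  exists c : nat -> K, J (p - \sum_(k < size B) c k *: B`_k).

Definition spans_mod J B V : Prop := forall v, V v -> in_span_mod J B v.

Section Span.
Variables (J : S -> Prop) (B : seq S).
Hypothesis idJ : is_ideal J.

Lemma in_span_mod_ideal p : J p -> in_span_mod J B p.
Proof. by move=> Jp; exists (fun=> 0); rewrite big1 ?subr0 // => k _; exact: scale0r. Qed.

Lemma in_span_modD p q : in_span_mod J B p -> in_span_mod J B q -> in_span_mod J B (p + q).
Proof.
move=> [c1 H1] [c2 H2]; exists (fun k => c1 k + c2 k).
under eq_bigr do rewrite scalerDl.
by rewrite big_split /= opprD addrACA; apply: idealD.
Qed.

Lemma in_span_modZ c p : in_span_mod J B p -> in_span_mod J B (c *: p).
Proof.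
move=> [c1 H1]; exists (fun k => c * c1 k).
under eq_bigr do rewrite -scalerA.
by rewrite -scaler_sumr -scalerBr; apply: idealZ.
Qed.

Lemma in_span_mod_mem b : b \in B -> in_span_mod J B b.
Proof.
move=> bB; exists (fun k => (k == index b B)%:R).
have ib : (index b B < size B)%N by rewrite index_mem.
rewrite (bigD1 (Ordinal ib)) //= eqxx scale1r nth_index // big1 ?addr0 ?subrr.
  exact: ideal0.
by move=> k; rewrite -val_eqE /= => /negbTE ->; rewrite scale0r.
Qed.

End Span.

Lemma left_kernel_nonzero m n (A : 'M[K]_(m, n)) :
  (n < m)%N -> exists2 c : 'rV_m, c != 0 & c *m A = 0.
Proof.
move=> ltnm; have : kermx A != 0.
  rewrite kermx_eq0 /row_free; apply: contraTneq ltnm => <-.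
  by rewrite -leqNgt rank_leq_col.
by case/rowV0Pn => c /sub_kermxP cA cnz; exists c.
Qed.

Lemma sum_scale_mulmx r n (c : 'rV[K]_r) (A : 'M[K]_(r, n)) B :
  \sum_(k < n) (c *m A) 0 k *: B`_k = \sum_(i < r) c 0 i *: \sum_(k < n) A i k *: B`_k.
Proof.
under eq_bigr do rewrite mxE scaler_suml.
rewrite exchange_big /=; apply: eq_bigr => i _; rewrite scaler_sumr.
by apply: eq_bigr => k _; rewrite scalerA.
Qed.

(* Steinitz exchange modulo J: a dependence among more vectors than the spanning
   family is read off a nonzero left kernel vector of the coefficient matrix. *)
Lemma indep_mod_size_le J V B ps : is_ideal J -> spans_mod J B V ->
  (forall p, p \in ps -> V p) -> indep_mod J ps -> (size ps <= size B)%N.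
Proof.
move=> idJ spanB Vps indep; rewrite leqNgt; apply/negP => lt_B_ps.
pose r := size ps; pose n := size B.
pose cf (i : nat) := epsilon (inhabits (fun _ : nat => (0 : K)))
   (fun c : nat -> K => J (ps`_i - \sum_(k < n) c k *: B`_k)).
have cfP (i : 'I_r) : J (ps`_i - \sum_(k < n) cf i k *: B`_k).
  apply: (epsilon_spec _ (fun c : nat -> K => J (ps`_i - \sum_(k < n) c k *: B`_k))).
  by apply: spanB; apply: Vps; apply: mem_nth.
pose A : 'M[K]_(r, n) := \matrix_(i, k) cf i k.
have [c cnz cA] := left_kernel_nonzero A lt_B_ps.
pose cs := [seq c 0 i | i <- enum 'I_r].
have cs_nth (i : 'I_r) : cs`_i = c 0 i.
  by rewrite /cs (nth_map i) ?size_enum_ord // nth_ord_enum.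
have : J (\sum_(i < r) cs`_i *: ps`_i).
  have -> : \sum_(i < r) cs`_i *: ps`_i =
      \sum_(i < r) c 0 i *: (ps`_i - \sum_(k < n) cf i k *: B`_k)
      + \sum_(k < n) (c *m A) 0 k *: B`_k.
    rewrite sum_scale_mulmx -big_split /=; apply: eq_bigr => i _.
    by rewrite cs_nth -scalerDr; congr (_ *: _); rewrite -[LHS](subrK (\sum_(k < n) cf i k *: B`_k)); congr (_ + _); apply: eq_bigr => k _; rewrite mxE.
  rewrite cA [X in _ + X]big1 => [|k _]; last by rewrite mxE scale0r.
  by rewrite addr0; apply: ideal_sum => // i _; apply: idealZ.
move/indep; rewrite size_map size_enum_ord => /(_ erefl) c0.
by case/eqP: cnz; apply/rowP => i; rewrite -cs_nth c0 mxE.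
Qed.

Lemma qdim_unique V J n : is_qdim V J n -> qdim V J = n.
Proof.
move=> H; have H' : is_qdim V J (qdim V J) :=
  epsilon_spec (inhabits 0%N) (is_qdim V J) (ex_intro _ n H).
case: H => [[ps1 [<- [V1 I1]]] max1]; case: H' => [[ps2 [e2 [V2 I2]]] max2].
by apply/eqP; rewrite eqn_leq -e2 max1 // e2 max2.
Qed.

Lemma qdim_basis V J B : is_ideal J -> (forall b, b \in B -> V b) ->
  indep_mod J B -> spans_mod J B V -> qdim V J = size B.
Proof.
move=> idJ VB indep spanB; apply: qdim_unique; split; first by exists B.
by move=> ps Vps; apply: indep_mod_size_le spanB Vps.
Qed.

End LinearAlgebra.

Section Degree.
Variables (K : fieldType) (s : nat).
Local Notation S := {mpoly K[s]}.
Implicit Types (J : S -> Prop).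

Lemma krull_dim_unique J k : is_krull_dim J k -> krull_dim J = k.
Proof.
move=> H; have H' : is_krull_dim J (krull_dim J) :=
  epsilon_spec (inhabits 0%N) (is_krull_dim J) (ex_intro _ k H).
case: H => [[Ps1 [C1 e1]] max1]; case: H' => [[Ps2 [C2 e2]] max2].
by apply/eqP; rewrite eqn_leq -ltnS -e2 max1 // -ltnS -e1 max2.
Qed.

Lemma converges_unique (a : nat -> rat) l1 l2 :
  converges a l1 -> converges a l2 -> l1 = l2.
Proof.
move=> H1 H2; apply/eqP; apply: contraT => ne.
have hp : 0 < `|l1 - l2| / 2 by rewrite divr_gt0 // normr_gt0 subr_eq0.
have [N1 HN1] := H1 _ hp; have [N2 HN2] := H2 _ hp.
have := HN1 (maxn N1 N2) (leq_maxl _ _); have := HN2 (maxn N1 N2) (leq_maxr _ _).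
set x := a _ => h2 h1.
have : `|l1 - l2| <= `|x - l1| + `|x - l2|.
  by rewrite (distrC x l1); have := ler_normD (l1 - x) (x - l2); rewrite addrA subrK.
move: h1 h2 hp; set e := `|l1 - l2|; set u := `|x - l1|; set w := `|x - l2|.
move=> h1 h2 hp h3; lra.
Qed.

Lemma limq_eventually_const (a : nat -> rat) c :
  (exists N, forall d, (N <= d)%N -> a d = c) -> limq a = c.
Proof.
move=> [N HN]; have Hc : converges a c.
  by move=> e he; exists N => d /HN ->; rewrite subrr normr0.
exact: converges_unique (epsilon_spec (inhabits 0) (converges a) (ex_intro _ c Hc)) Hc.
Qed.

Lemma deg_krull_dim1 J (c : nat) : krull_dim J = 1%N ->
  (exists N, forall d, (N <= d)%N -> hilbert_fun J d = c) -> deg J = c%:R.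
Proof.
move=> dimJ [N HN]; rewrite /deg dimJ fact0 mul1r; apply: limq_eventually_const.
by exists N => d /HN ->; rewrite expr0 divr1.
Qed.

End Degree.

Section LeadingMonomials.
Variables (K : fieldType) (s : nat) (o : monomial_order s).
Local Notation S := {mpoly K[s]}.
Local Notation le := (mle o).

Definition mle_max_seq (l : seq 'X_{1..s}) :=
  foldr (fun m acc => if le acc m then m else acc) 0%MM l.

Lemma mle_max_seq_mem l : l != [::] -> mle_max_seq l \in l.
Proof.
elim: l => [//|a l IH] _ /=; case: ifP => H; first by rewrite inE eqxx.
case: l IH H => [|b l] IH H; first by rewrite /= mle_0 in H.
by rewrite inE IH ?orbT.
Qed.

Lemma mle_max_seq_ge l m : m \in l -> le m (mle_max_seq l).
Proof.
elim: l => [//|a l IH]; rewrite inE => /orP [/eqP ->|ml] /=.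
  case: ifP => [_|]; first exact: mle_refl.
  by move=> /negbT H; case/orP: (mle_total o a (mle_max_seq l)) => //; rewrite (negbTE H).
case: ifP => [H|_]; last exact: IH.
exact: mle_trans (IH ml) H.
Qed.

Lemma lead_mnm_supp (p : S) : p != 0 -> lead_mnm o p \in msupp p.
Proof. by move=> nz; apply: mle_max_seq_mem; rewrite msupp_eq0. Qed.

Lemma mle_lead_mnm (p : S) m : m \in msupp p -> le m (lead_mnm o p).
Proof. exact: mle_max_seq_ge. Qed.

Lemma mle_eq m1 m2 : le m1 m2 -> le m2 m1 -> m1 = m2.
Proof. by move=> h1 h2; apply: (@mle_anti _ o); rewrite h1 h2. Qed.

Lemma lead_mnmE (p : S) m : m \in msupp p ->
  (forall m', m' \in msupp p -> le m' m) -> lead_mnm o p = m.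
Proof.
move=> mp H; apply: mle_eq; last exact: mle_lead_mnm.
by apply/H/lead_mnm_supp; apply: contraTneq mp => ->; rewrite msupp0.
Qed.

Lemma mle_addl a m1 m2 : le m1 m2 -> le (a + m1)%MM (a + m2)%MM.
Proof. by move=> h; rewrite ![(a + _)%MM]addmC; apply: mle_add. Qed.

Lemma lead_mnmXM a (q : S) : q != 0 -> lead_mnm o ('X_[a] * q) = (a + lead_mnm o q)%MM.
Proof.
have suppE m : (m \in msupp ('X_[a] * q)) = (m \in [seq (a + m')%MM | m' <- msupp q]).
  by rewrite mulrC (perm_mem (msuppMX q a)).
move=> nz; apply: lead_mnmE; first by rewrite suppE map_f // lead_mnm_supp.
by move=> m'; rewrite suppE => /mapP [m'' /mle_lead_mnm H ->]; apply: mle_addl.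
Qed.

End LeadingMonomials.

Section Homogeneous.
Variables (K : fieldType) (s : nat).
Local Notation S := {mpoly K[s]}.

Lemma dhomogXU (k : 'I_s) : ('X_k : S) \is 1.-homog.
Proof. by rewrite dhomogX; apply/eqP; exact: mdeg1. Qed.

Lemma dhomogXUn d (k : 'I_s) : ('X_k : S) ^+ d \is d.-homog.
Proof. by have := dhomogMn d (dhomogXU k); rewrite mul1n. Qed.

Lemma dhomog_prod_linear (T : eqType) (r : seq T) (F : T -> S) :
  (forall i, i \in r -> F i \is 1.-homog) -> \prod_(i <- r) F i \is (size r).-homog.
Proof.
elim: r => [|a r IH] H; first by rewrite big_nil dhomog1.
rewrite big_cons; apply: (dhomogM (H a _) (IH _)); first by rewrite inE eqxx.
by move=> i ir; apply: H; rewrite inE ir orbT.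
Qed.

Lemma mcoeff_sumX_seq (r : seq 'X_{1..s}) (F : 'X_{1..s} -> K) m : uniq r ->
  (\sum_(m' <- r) F m' *: ('X_[m'] : S))@_m = if m \in r then F m else 0.
Proof.
move=> ur; rewrite raddf_sum /=.
under eq_bigr do rewrite mcoeffZ mcoeffX.
case: ifP => mr.
  rewrite (bigD1_seq m) //= eqxx mulr1 big1 ?addr0 // => m' /negbTE ->.
  by rewrite mulr0.
rewrite big_seq big1 // => m' m'r; case: eqP => [e|_]; last by rewrite mulr0.
by move: mr; rewrite -e m'r.
Qed.

Lemma mcoeff_sumX (r : seq 'X_{1..s}) (F : nat -> K) m : uniq r ->
  (\sum_(i < size r) F i *: ('X_[nth 0%MM r i] : S))@_m =
     if m \in r then F (index m r) else 0.
Proof.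
move=> ur; rewrite raddf_sum /=.
under eq_bigr do rewrite mcoeffZ mcoeffX.
case: ifP => mr.
  have ir : (index m r < size r)%N by rewrite index_mem.
  rewrite (bigD1 (Ordinal ir)) //= nth_index // eqxx mulr1 big1 ?addr0 // => i ne.
  case: eqP => [e|]; last by rewrite mulr0.
  by move: ne; rewrite -val_eqE /= -e index_uniq ?eqxx.
rewrite big1 // => i _; case: eqP => [e|_]; last by rewrite mulr0.
by move: mr; rewrite -e mem_nth.
Qed.

Lemma pihomog_mcoeff e (g : S) m :
  (pihomog mdeg e g)@_m = if mdeg m == e then g@_m else 0.
Proof.
rewrite pihomogE -big_filter mcoeff_sumX_seq ?filter_uniq ?msupp_uniq //.
rewrite mem_filter; case: (mdeg m == e) => //=.
by case: ifP => // /negbT; rewrite mcoeff_msupp negbK => /eqP.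
Qed.

Lemma pihomog_dhomog d e (g : S) : g \is d.-homog ->
  pihomog mdeg e g = if e == d then g else 0.
Proof.
move=> Hg; case: eqP => [->|/eqP ne]; first exact: pihomog_dE.
by apply: pihomog_ne0 Hg; rewrite eq_sym.
Qed.

Lemma lead_mnm_pihomog (o : monomial_order s) (g : S) (e := mdeg (lead_mnm o g)) :
  g != 0 -> pihomog mdeg e g != 0 /\ lead_mnm o (pihomog mdeg e g) = lead_mnm o g.
Proof.
move=> nz; have Hm : lead_mnm o g \in msupp (pihomog mdeg e g).
  by rewrite mcoeff_msupp pihomog_mcoeff eqxx -mcoeff_msupp lead_mnm_supp.
split; first by apply: contraTneq Hm => ->; rewrite msupp0.
apply: lead_mnmE => // m'; rewrite mcoeff_msupp pihomog_mcoeff.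
case: ifP => _; last by rewrite eqxx.
by rewrite -mcoeff_msupp; apply: mle_lead_mnm.
Qed.

End Homogeneous.

Section Lines.
Variables (K : fieldType) (s : nat).
Local Notation S := {mpoly K[s]}.
Implicit Types (v : 'I_s -> K) (p g : S).

(* [line_eval v p] is the restriction [t |-> p(t v)] of [p] to the line through [v]. *)
Definition line_eval v : S -> {poly K} := mmap polyC (fun k => v k *: 'X).
HB.instance Definition _ v := GRing.RMorphism.copy (line_eval v) (line_eval v).

Lemma line_evalX v (i : 'I_s) : line_eval v 'X_i = v i *: 'X.
Proof. by rewrite /line_eval mmapX mmap1U. Qed.

Lemma line_evalZ v c p : line_eval v (c *: p) = c *: line_eval v p.
Proof. by rewrite /line_eval mmapZ mul_polyC. Qed.

Lemma line_eval_mcoeff v p e : (line_eval v p)`_e = (pihomog mdeg e p).@[v].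
Proof.
have mmap1E m : mmap1 (fun k => v k *: ('X : {poly K})) m = ('X_[m] : S).@[v] *: 'X^(mdeg m).
  rewrite /mmap1 mevalX mdegE -prodrXr -mul_polyC rmorph_prod -big_split /=.
  by apply: eq_bigr => i _; rewrite exprZn mul_polyC.
rewrite /line_eval /mmap pihomogE coef_sum rmorph_sum /= [RHS]big_mkcond /=.
apply: eq_bigr => m _; rewrite mmap1E coefCM coefZ coefXn.
case: eqP => [->|]; first by rewrite eqxx mulr1 mevalZ.
by move/eqP; rewrite eq_sym => /negbTE ->; rewrite !mulr0.
Qed.

Lemma line_eval_eq0 v p : line_eval v p = 0 <-> forall e, (pihomog mdeg e p).@[v] = 0.
Proof.
split=> [H e|H]; first by rewrite -line_eval_mcoeff H coef0.
by apply/polyP => e; rewrite line_eval_mcoeff H coef0.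
Qed.

Lemma line_eval_dhomog v d g : g \is d.-homog -> line_eval v g = g.@[v] *: 'X^d.
Proof.
move=> Hg; apply/polyP => e; rewrite line_eval_mcoeff coefZ coefXn (pihomog_dhomog e Hg).
by case: eqP => _; rewrite ?mulr1 ?mulr0 ?meval0.
Qed.

Lemma line_eval_dhomog_eq0 v d g : g \is d.-homog -> line_eval v g = 0 <-> g.@[v] = 0.
Proof.
move=> Hg; rewrite (line_eval_dhomog v Hg); split=> [|->]; last by rewrite scale0r.
by move/eqP; rewrite scaler_eq0 -size_poly_eq0 size_polyXn orbF => /eqP.
Qed.

Lemma kernel_prime (R : idomainType) (phi : {rmorphism S -> R}) :
  is_prime_ideal (fun p => phi p = 0).
Proof.
split; [split; [|split]|split].
- exact: rmorph0.
- by move=> a b Ha Hb; rewrite rmorphD Ha Hb addr0.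
- by move=> a b Hb; rewrite rmorphM Hb mulr0.
- by rewrite rmorph1; apply/eqP; rewrite oner_eq0.
- by move=> a b; rewrite rmorphM => /eqP; rewrite mulf_eq0 => /orP [] /eqP; [left|right].
Qed.

(* The ideal of the projective point [v], and the ideal of polynomials without
   constant term, which contains it strictly when [v != 0]. *)
Definition line_ideal v : S -> Prop := fun p => line_eval v p = 0.
Definition origin_ideal v : S -> Prop := fun p => (line_eval v p).[0] = 0.

Lemma line_ideal_prime v : is_prime_ideal (line_ideal v).
Proof. exact: kernel_prime. Qed.

Lemma origin_ideal_prime v : is_prime_ideal (origin_ideal v).
Proof. exact: (kernel_prime (horner_eval 0 \o line_eval v)). Qed.

End Lines.

Section VanishingIdeal.
Variables (K : fieldType) (s : nat) (X : seq (point K s)).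
Local Notation S := {mpoly K[s]}.
Local Notation I := (vanishing_ideal X).

Lemma vanishing_ideal_is_ideal : is_ideal I.
Proof. exact: gen_ideal_is_ideal. Qed.

Lemma vanishing_ideal_dhomog d (g : S) : g \is d.-homog ->
  (forall x, x \in X -> g.@[x] = 0) -> I g.
Proof. by move=> Hd Hg; apply: gen_ideal_gen; split=> //; exists d. Qed.

Lemma vanishing_idealP (h : S) : I h <-> forall x, x \in X -> line_ideal x h.
Proof.
split.
- move=> Ih x xX; move: h Ih; apply: gen_ideal_min; first exact: (line_ideal_prime x).1.
  by move=> g [[d Hd] Hg]; apply/(line_eval_dhomog_eq0 x Hd); apply: Hg.
- move=> H; rewrite (pihomog_partitionE (leqnn (msize h))).
  apply: ideal_sum => [|d _]; first exact: vanishing_ideal_is_ideal.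
  apply: (vanishing_ideal_dhomog (pihomogP _ _ _)) => x xX.
  by move: (H x xX) => /line_eval_eq0; apply.
Qed.

Lemma vanishing_ideal_eval (h : S) x : I h -> x \in X -> h.@[x] = 0.
Proof.
move=> /vanishing_idealP H xX; rewrite (pihomog_partitionE (leqnn (msize h))) rmorph_sum /=.
by apply: big1 => d _; move: (H x xX) => /line_eval_eq0; apply.
Qed.

End VanishingIdeal.

Section LeadCancel.
Variables (K : fieldType) (s : nat) (o : monomial_order s).
Local Notation S := {mpoly K[s]}.
Local Notation le := (mle o).

Lemma msupp_cancel_lead (p q : S) m : q@_m != 0 ->
  (forall m', m' \in msupp p -> le m' m) -> (forall m', m' \in msupp q -> le m' m) ->
  forall m', m' \in msupp (p - (p@_m / q@_m) *: q) -> le m' m && (m' != m).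
Proof.
move=> qm Hp Hq m' Hm'; apply/andP; split.
  by move/msuppB_le: Hm'; rewrite mem_cat => /orP [/Hp|/msuppZ_le /Hq].
move: Hm'; rewrite mcoeff_msupp mcoeffB mcoeffZ; apply: contraNneq => ->.
by rewrite mulfVK // subrr.
Qed.

End LeadCancel.

Section Monomials.
Variables (s : nat).

Definition monomials_deg d : seq 'X_{1..s} :=
  [seq val m | m <- enum [pred m : 'X_{1..s < d.+1} | mdeg (val m) == d]].

Lemma mem_monomials_deg d m : (m \in monomials_deg d) = (mdeg m == d).
Proof.
apply/mapP/idP => [[m' ] |md]; first by rewrite mem_enum inE => H1 H2; rewrite H2.
have H : (mdeg m < d.+1)%N by rewrite (eqP md).
by exists (BMultinom H); rewrite // mem_enum inE.
Qed.

Lemma monomials_deg_uniq d : uniq (monomials_deg d).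
Proof. by rewrite map_inj_uniq ?enum_uniq //; apply: val_inj. Qed.

End Monomials.

Section FinitePointSet.
Variables (K : fieldType) (s : nat) (X : seq (point K s)).
Hypothesis HX : proj_finite_set X.
Local Notation S := {mpoly K[s]}.
Local Notation x0 := ([ffun=> 0] : point K s).

Lemma proj_finite_set_uniq : uniq X.
Proof.
apply/(uniqP x0) => i j ir jr e; apply/eqP; apply: contraT => ne.
case: HX => _ H; exfalso; apply: (H i j ir jr); first exact/eqP.
by exists 1 => k; rewrite e mul1r.
Qed.

Lemma proj_point_nonzero x : x \in X -> exists k, x k != 0.
Proof.
case: HX => H _ /H nz; apply/existsP; move: nz; apply: contraR => /existsPn H'.
by apply/eqP/ffunP => k; rewrite ffunE; apply/eqP; move: (H' k); rewrite negbK.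
Qed.

Lemma separating_linear_form x y : x \in X -> y \in X -> x != y ->
  exists l : S, [/\ l \is 1.-homog, l.@[x] = 0 & l.@[y] != 0].
Proof.
move=> xX yX ne; have [k yk] := proj_point_nonzero yX.
have [m Hm] : exists m, x k * y m - x m * y k != 0.
  apply/existsP; apply: contraT => /existsPn H; exfalso.
  case: HX => _ /(_ (index x X) (index y X)); rewrite !index_mem !nth_index //.
  apply=> // [e|]; first by case/eqP: ne; rewrite -(nth_index x0 xX) e nth_index.
  exists (x k / y k) => m; move: (H m); rewrite negbK subr_eq0 => /eqP e.
  by rewrite mulrAC e mulfK.
exists (x k *: 'X_m - x m *: 'X_k); split.
- by apply: rpredB; apply: rpredZ; apply: dhomogXU.
- by rewrite mevalB !mevalZ !mevalXU mulrC subrr.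
- by rewrite mevalB !mevalZ !mevalXU.
Qed.

(* A product of separating linear forms, padded by a power of a variable not
   vanishing at [y], has degree exactly [d]. *)
Lemma dirac_form_exists d y : (size X <= d)%N -> y \in X ->
  exists dl : S, [/\ dl \is d.-homog, dl.@[y] = 1 &
     forall x, x \in X -> x != y -> dl.@[x] = 0].
Proof.
move=> Hd yX; have [k yk] := proj_point_nonzero yX.
pose L := [seq x <- X | x != y].
pose P x (l : S) := [/\ l \is 1.-homog, l.@[x] = 0 & l.@[y] != 0].
pose lf x := epsilon (inhabits 0) (P x).
have Hlf x : x \in L -> P x (lf x).
  rewrite mem_filter => /andP [ne xX].
  by apply: (epsilon_spec (inhabits 0) (P x)); apply: separating_linear_form.
have HL : (size L <= d)%N by apply: leq_trans Hd; rewrite size_filter count_size.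
pose q := (\prod_(x <- L) lf x) * 'X_k ^+ (d - size L).
have qy : q.@[y] != 0.
  rewrite /q rmorphM rmorph_prod rmorphXn /= mevalXU mulf_neq0 ?expf_neq0 //.
  by rewrite prodf_seq_neq0; apply/allP => x /Hlf [].
exists ((q.@[y])^-1 *: q); split.
- rewrite rpredZ // -(subnKC HL); apply: dhomogM; last exact: dhomogXUn.
  by apply: dhomog_prod_linear => x /Hlf [].
- by rewrite mevalZ mulVf.
- move=> x xX ne; rewrite mevalZ.
  have xL : x \in L by rewrite mem_filter ne.
  suff -> : q.@[x] = 0 by rewrite mulr0.
  rewrite /q rmorphM rmorph_prod /= (big_rem x xL) /=; case: (Hlf x xL) => _ -> _.
  by rewrite !mul0r.
Qed.

Definition dirac_form d (y : point K s) : S := epsilon (inhabits 0) (fun dl : S =>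
  [/\ dl \is d.-homog, dl.@[y] = 1 & forall x, x \in X -> x != y -> dl.@[x] = 0]).

Lemma dirac_formP d y : (size X <= d)%N -> y \in X ->
  [/\ dirac_form d y \is d.-homog, (dirac_form d y).@[y] = 1 &
     forall x, x \in X -> x != y -> (dirac_form d y).@[x] = 0].
Proof.
by move=> Hd yX; apply: (epsilon_spec _ (fun dl : S => [/\ dl \is d.-homog, dl.@[y] = 1 &
  forall x, x \in X -> x != y -> dl.@[x] = 0])); apply: dirac_form_exists.
Qed.

Lemma dirac_form_eval d y x : (size X <= d)%N -> y \in X -> x \in X ->
  (dirac_form d y).@[x] = (x == y)%:R.
Proof.
move=> Hd yX xX; case: (dirac_formP Hd yX) => _ H1 H2.
by case: eqP => [->|/eqP ne]; [|rewrite H2].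
Qed.

Lemma dirac_forms_dhomog d Y p : (size X <= d)%N -> {subset Y <= X} ->
  p \in map (dirac_form d) Y -> p \is d.-homog.
Proof. by move=> Hd YX /mapP [y /YX yX ->]; case: (dirac_formP Hd yX). Qed.

Lemma dirac_sum_eval d (Y : seq (point K s)) (F : nat -> K) x :
  (size X <= d)%N -> {subset Y <= X} -> uniq Y -> x \in X ->
  (\sum_(i < size Y) F i *: (map (dirac_form d) Y)`_i).@[x] =
  if x \in Y then F (index x Y) else 0.
Proof.
move=> Hd YX uY xX; rewrite rmorph_sum /=.
rewrite (eq_bigr (fun i : 'I_(size Y) => F i * (x == nth x0 Y i)%:R)); last first.
  by move=> i _; rewrite (nth_map x0) // mevalZ dirac_form_eval // YX // mem_nth.
case: ifP => xY.
  have ir : (index x Y < size Y)%N by rewrite index_mem.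
  rewrite (bigD1 (Ordinal ir)) //= nth_index // eqxx mulr1 big1 ?addr0 // => i ne.
  case: eqP => [e|]; last by rewrite mulr0.
  by move: ne; rewrite -val_eqE /= e index_uniq ?eqxx.
rewrite big1 // => i _; case: eqP => [e|_]; last by rewrite mulr0.
by move: xY; rewrite e mem_nth.
Qed.

Lemma dirac_forms_indep (J : S -> Prop) d Y : (size X <= d)%N -> {subset Y <= X} ->
  uniq Y -> (forall p, J p -> forall y, y \in Y -> p.@[y] = 0) ->
  indep_mod J (map (dirac_form d) Y).
Proof.
move=> Hd YX uY JY cs; rewrite size_map => szcs /JY H i.
case: (ltnP i (size Y)) => ir; last by rewrite nth_default // szcs.
have := H _ (mem_nth x0 ir); rewrite (dirac_sum_eval (fun i => cs`_i)) ?YX ?mem_nth //.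
by rewrite index_uniq.
Qed.

End FinitePointSet.

Section HilbertFunctions.
Variables (K : fieldType) (s : nat) (X : seq (point K s)).
Hypothesis HX : proj_finite_set X.
Local Notation S := {mpoly K[s]}.
Local Notation I := (vanishing_ideal X).
Local Notation x0 := ([ffun=> 0] : point K s).

Lemma dirac_sum_dhomog d (Y : seq (point K s)) (F : nat -> K) :
  (size X <= d)%N -> {subset Y <= X} ->
  \sum_(i < size Y) F i *: (map (dirac_form X d) Y)`_i \is d.-homog.
Proof.
move=> Hd YX; apply: rpred_sum => i _; apply: rpredZ.
by apply: (dirac_forms_dhomog HX Hd YX); apply: mem_nth; rewrite size_map.
Qed.

Lemma dirac_forms_span_vanishing d : (size X <= d)%N ->
  spans_mod I (map (dirac_form X d) X) (fun p => p \is d.-homog).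
Proof.
move=> Hd p Hp; pose c k := p.@[nth x0 X k]; exists c; rewrite size_map.
apply: (vanishing_ideal_dhomog (d := d)).
  by apply: rpredB => //; apply: dirac_sum_dhomog.
move=> x xX; rewrite mevalB (dirac_sum_eval HX) ?proj_finite_set_uniq //.
by rewrite xX /c nth_index // subrr.
Qed.

Lemma hilbert_vanishing_ideal d : (size X <= d)%N -> hilbert_fun I d = size X.
Proof.
move=> Hd; rewrite /hilbert_fun -(size_map (dirac_form X d)).
apply: qdim_basis (vanishing_ideal_is_ideal X) _ _ (dirac_forms_span_vanishing Hd).
  by move=> p; apply: (dirac_forms_dhomog HX Hd).
apply: dirac_forms_indep; rewrite ?proj_finite_set_uniq //.
by move=> p Ip y; apply: vanishing_ideal_eval.
Qed.

Variables (f : S) (df : nat).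
Hypothesis Hf : f \is df.-homog.
Local Notation J := (ideal_add I f).
Local Notation V := [seq x : point K s <- X | f.@[x] == 0].

Lemma zeros_subset : {subset V <= X}.
Proof. by move=> x; rewrite mem_filter => /andP []. Qed.

Lemma zeros_uniq : uniq V.
Proof. exact/filter_uniq/proj_finite_set_uniq. Qed.

Lemma ideal_add_vanishes p : J p -> forall y, y \in V -> p.@[y] = 0.
Proof.
move=> Jp y; rewrite mem_filter => /andP [/eqP fy yX]; move: p Jp.
by apply: ideal_add_min (zeros_is_ideal y) _ fy => g /vanishing_ideal_eval; apply.
Qed.

(* [q - h f] vanishes on [X] when the cofactor [h] interpolates [q / f] off [V]. *)
Lemma ideal_add_of_vanishing d q : (size X + df <= d)%N -> q \is d.-homog ->
  (forall x, x \in V -> q.@[x] = 0) -> J q.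
Proof.
move=> Hd qh qV; have HdX : (size X <= d - df)%N by lia.
pose c k := let x := nth x0 X k in if f.@[x] == 0 then 0 else q.@[x] / f.@[x].
pose h := \sum_(k < size X) c k *: (map (dirac_form X (d - df)) X)`_k.
have idJ := ideal_add_is_ideal I f.
rewrite -(subrK (h * f) q); apply: (idealD idJ); last exact: (idealMl idJ _ (ideal_add_r _ _)).
apply/ideal_add_l/(vanishing_ideal_dhomog (d := d)).
  rewrite rpredB // -(subnK (_ : df <= d)%N); last by lia.
  by apply: dhomogM Hf; apply: dirac_sum_dhomog.
move=> x xX; rewrite mevalB mevalM (dirac_sum_eval HX) ?proj_finite_set_uniq //.
rewrite xX /c nth_index //; case: eqP => [f0|/eqP fn0]; last by rewrite mulfVK // subrr.
by rewrite qV ?mem_filter ?xX ?f0 ?eqxx // mul0r subrr.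
Qed.

Lemma dirac_forms_span_ideal_add d : (size X + df <= d)%N ->
  spans_mod J (map (dirac_form X d) V) (fun p => p \is d.-homog).
Proof.
move=> Hd p Hp; have HdX : (size X <= d)%N by lia.
pose c k := p.@[nth x0 V k]; exists c; rewrite size_map.
apply: (ideal_add_of_vanishing Hd).
  by rewrite rpredB //; apply: dirac_sum_dhomog => //; exact: zeros_subset.
move=> x xV; rewrite mevalB (dirac_sum_eval HX) ?zeros_uniq ?zeros_subset //.
  by rewrite xV /c nth_index // subrr.
exact: zeros_subset.
Qed.

Lemma dirac_forms_zeros_indep d : (size X <= d)%N ->
  indep_mod J (map (dirac_form X d) V).
Proof.
move=> Hd; apply: dirac_forms_indep zeros_uniq ideal_add_vanishes => //.
exact: zeros_subset.
Qed.

Lemma hilbert_ideal_add d : (size X + df <= d)%N -> hilbert_fun J d = size V.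
Proof.
move=> Hd; have HdX : (size X <= d)%N by lia.
rewrite /hilbert_fun -(size_map (dirac_form X d)).
apply: qdim_basis (ideal_add_is_ideal I f) _ _ (dirac_forms_span_ideal_add Hd).
  by move=> p; apply: (dirac_forms_dhomog HX HdX zeros_subset).
exact: dirac_forms_zeros_indep.
Qed.

End HilbertFunctions.

Lemma sub_count_lt (T : eqType) (P Q : pred T) (r : seq T) x :
  subpred P Q -> x \in r -> Q x -> ~~ P x -> (count P r < count Q r)%N.
Proof.
move=> PQ; elim: r => [//|a r IH]; rewrite inE => /orP [/eqP <-|xr] Qx nPx /=.
  by rewrite Qx (negbTE nPx) add0n add1n ltnS; apply: sub_count.
rewrite -addnS; apply: leq_add; last exact: IH.
by case: (P a) (PQ a) => // ->.
Qed.

Section InitialIdeal.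
Variables (K : fieldType) (s : nat) (X : seq (point K s)) (o : monomial_order s).
Variables (f : {mpoly K[s]}) (df : nat).
Hypotheses (HX : proj_finite_set X) (Hf : f \is df.-homog) (fnz : f != 0).
Local Notation S := {mpoly K[s]}.
Local Notation I := (vanishing_ideal X).
Local Notation J := (ideal_add I f).
Local Notation M := (ideal_add (in_ideal o I) (in_poly o f)).
Local Notation V := [seq x : point K s <- X | f.@[x] == 0].
Local Notation le := (mle o).

Definition lead_set (b : 'X_{1..s}) : Prop :=
  (exists g, I g /\ g != 0 /\ b = lead_mnm o g) \/ b = lead_mnm o f.

Definition lead_divisible (p : S) : Prop :=
  forall m, m \in msupp p -> exists b, lead_set b /\ (b <= m)%MM.

Lemma lead_divisible_ideal : is_ideal lead_divisible.
Proof.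
split; [|split].
- by move=> m; rewrite msupp0.
- by move=> a b Ha Hb m /msuppD_le; rewrite mem_cat => /orP [/Ha|/Hb].
- move=> a b Hb m /msuppM_le /allpairsP [[m1 m2] /= [m1a m2b ->]].
  have [c [Lc cm]] := Hb _ m2b; exists c; split=> //.
  by apply: lepm_trans cm _; apply: lem_addl.
Qed.

Lemma lead_divisibleX b : lead_set b -> lead_divisible 'X_[b].
Proof. by move=> Lb m; rewrite msuppX inE => /eqP ->; exists b; split=> //; apply: lepm_refl. Qed.

Lemma initial_lead_divisible p : M p -> lead_divisible p.
Proof.
move: p; apply: ideal_add_min lead_divisible_ideal _ (lead_divisibleX (or_intror erefl)).
apply: gen_ideal_min lead_divisible_ideal _ => g [h [Ih [nz ->]]].
by apply: lead_divisibleX; left; exists h.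
Qed.

Lemma initial_is_ideal : is_ideal M.
Proof. exact: ideal_add_is_ideal. Qed.

Lemma initial_lead g : I g -> g != 0 -> M 'X_[lead_mnm o g].
Proof. by move=> Ig nz; apply/ideal_add_l/gen_ideal_gen; exists g. Qed.

Lemma initial_monomial_mul m m' : M 'X_[m] -> (m <= m')%MM -> M 'X_[m'].
Proof.
move=> Mm le_mm'; rewrite -(submK le_mm') mpolyXD.
exact: (idealMl initial_is_ideal _ Mm).
Qed.

Lemma initial_monomialP m : M 'X_[m] <-> exists b, lead_set b /\ (b <= m)%MM.
Proof.
split; first by move/initial_lead_divisible; apply; rewrite msuppX inE.
move=> [b [[[g [Ig [nz ->]]]|->] bm]]; apply: initial_monomial_mul bm.
  exact: initial_lead.
exact: ideal_add_r.
Qed.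

Definition in_initial m : bool :=
  if excluded_middle_informative (M 'X_[m]) then true else false.

Lemma in_initialP m : reflect (M 'X_[m]) (in_initial m).
Proof. by rewrite /in_initial; case: excluded_middle_informative => H; constructor. Qed.

Definition std d := [seq m <- monomials_deg s d | ~~ in_initial m].
Local Notation stdX d := [seq ('X_[m] : S) | m <- std d].

Lemma mem_std d m : (m \in std d) = (mdeg m == d) && ~~ in_initial m.
Proof. by rewrite mem_filter mem_monomials_deg andbC. Qed.

Lemma std_uniq d : uniq (std d).
Proof. exact/filter_uniq/monomials_deg_uniq. Qed.

Lemma stdX_sum d (F : nat -> K) :
  \sum_(i < size (std d)) F i *: (stdX d)`_i =
  \sum_(i < size (std d)) F i *: ('X_[nth 0%MM (std d) i] : S).
Proof. by apply: eq_bigr => i _; rewrite (nth_map 0%MM). Qed.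

Lemma stdX_dhomog d p : p \in stdX d -> p \is d.-homog.
Proof. by move=> /mapP [m]; rewrite mem_std => /andP [/eqP <- _] ->; rewrite dhomogX. Qed.

Lemma stdX_indep_initial d : indep_mod M (stdX d).
Proof.
move=> cs; rewrite size_map stdX_sum => szcs /initial_lead_divisible H i.
case: (ltnP i (size (std d))) => ir; last by rewrite nth_default // szcs.
apply/eqP; apply: contraT => nz; have mi : nth 0%MM (std d) i \in std d by apply: mem_nth.
have /H /initial_monomialP /in_initialP : nth 0%MM (std d) i \in
    msupp (\sum_(i < size (std d)) cs`_i *: ('X_[nth 0%MM (std d) i] : S)).
  by rewrite mcoeff_msupp (mcoeff_sumX (fun i => cs`_i)) ?std_uniq // mi index_uniq ?std_uniq.
by move: mi; rewrite mem_std => /andP [_ /negbTE ->].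
Qed.

(* A nonzero combination of standard monomials has a standard leading monomial,
   while every nonzero element of [I] has its leading monomial in [M]. *)
Lemma stdX_indep_vanishing d : indep_mod I (stdX d).
Proof.
move=> cs; rewrite size_map stdX_sum => szcs; set q := \sum_(i < _) _ => Iq i.
case: (ltnP i (size (std d))) => ir; last by rewrite nth_default // szcs.
apply/eqP; apply: contraT => nz; have mi : nth 0%MM (std d) i \in std d by apply: mem_nth.
have qm : q@_(nth 0%MM (std d) i) = cs`_i.
  by rewrite (mcoeff_sumX (fun i => cs`_i)) ?std_uniq // mi index_uniq ?std_uniq.
have qnz : q != 0 by apply: contra_neq nz => q0; rewrite -qm q0 mcoeff0.
have := lead_mnm_supp o qnz; rewrite mcoeff_msupp (mcoeff_sumX (fun i => cs`_i)) ?std_uniq //.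
case: ifP => [ls _|_]; last by rewrite eqxx.
by move: ls; rewrite mem_std => /andP [_ /in_initialP []]; apply: initial_lead.
Qed.

Lemma hilbert_initial d : hilbert_fun M d = size (std d).
Proof.
rewrite /hilbert_fun -(size_map (fun m => 'X_[m] : S)).
apply: (qdim_basis initial_is_ideal (@stdX_dhomog d)); first exact: stdX_indep_initial.
move=> v Hv.
pose c k := v@_(nth 0%MM (std d) k); exists c; rewrite size_map stdX_sum.
apply: (ideal_monomials initial_is_ideal) => m.
rewrite mcoeff_msupp mcoeffB (mcoeff_sumX c) ?std_uniq //.
case: ifP => [ms|ns]; first by rewrite /c nth_index // subrr eqxx.
rewrite subr0 -mcoeff_msupp => mv; apply/in_initialP; move: ns.
by rewrite mem_std (dhomogP _ _ _ Hv _ mv) eqxx /= => /negbFE.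
Qed.

Lemma std_size_le d : (size X <= d)%N -> (size (std d) <= size X)%N.
Proof.
move=> Hd; rewrite -(size_map (fun m => 'X_[m] : S)) -(size_map (dirac_form X d) X).
apply: (indep_mod_size_le (vanishing_ideal_is_ideal X) (dirac_forms_span_vanishing HX Hd)).
  exact: stdX_dhomog.
exact: stdX_indep_vanishing.
Qed.

Lemma lead_set_dhomog b : lead_set b ->
  exists g : S, [/\ J g, g \is (mdeg b).-homog, g != 0 & lead_mnm o g = b].
Proof.
case=> [[g [Ig [nz ->]]]|->].
- have [nz' lead_e] := lead_mnm_pihomog o nz.
  exists (pihomog mdeg (mdeg (lead_mnm o g)) g); split=> //; last exact: pihomogP.
  apply/ideal_add_l/(vanishing_ideal_dhomog (pihomogP _ _ _)) => x xX.
  by have /line_eval_eq0 := (vanishing_idealP X g).1 Ig x xX; apply.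
- exists f; split=> //; first exact: ideal_add_r.
  by rewrite (dhomogP _ _ _ Hf _ (lead_mnm_supp o fnz)).
Qed.

Lemma initial_witness m : M 'X_[m] ->
  exists q : S, [/\ J q, q \is (mdeg m).-homog, q@_m != 0 &
                    forall m', m' \in msupp q -> le m' m].
Proof.
move=> /initial_monomialP [b [Lb bm]]; have [g [Jg hg nz lg]] := lead_set_dhomog Lb.
have Xnz : ('X_[m - b] : S) != 0 by rewrite -msupp_eq0 msuppX.
have qnz : 'X_[m - b] * g != 0 by rewrite mulf_neq0.
have lq : lead_mnm o ('X_[m - b] * g) = m by rewrite lead_mnmXM // lg submK.
exists ('X_[m - b] * g); split.
- exact: (idealMl (ideal_add_is_ideal _ _) _ Jg).
- by rewrite -{2}(submK bm) mdegD; apply: dhomogM; rewrite ?dhomogX.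
- by rewrite -mcoeff_msupp -{1}lq; apply: lead_mnm_supp.
- by move=> m' /(mle_lead_mnm o); rewrite lq.
Qed.

Lemma reduction_step d m : mdeg m = d ->
  exists q : S, [/\ q \is d.-homog, q@_m != 0, (forall m', m' \in msupp q -> le m' m)
                  & in_span_mod J (stdX d) q].
Proof.
move=> md; case: (in_initialP m) => [/initial_witness [q [Jq qh qm qle]]|nMm].
  by exists q; split; rewrite -?md //; apply: in_span_mod_ideal.
exists 'X_[m]; split.
- by rewrite dhomogX; apply/eqP.
- by rewrite mcoeffX eqxx oner_eq0.
- by move=> m'; rewrite msuppX inE => /eqP ->; apply: mle_refl.
- apply: (in_span_mod_mem (ideal_add_is_ideal _ _)); apply: map_f.
  by rewrite mem_std md eqxx; apply/in_initialP.
Qed.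

Definition mle_rank d m := count (fun m' => le m' m) (monomials_deg s d).

Lemma mle_rank_lt d m m' : le m' m -> m' != m -> mdeg m = d ->
  (mle_rank d m' < mle_rank d m)%N.
Proof.
move=> lm ne md; apply: (sub_count_lt (x := m)).
- by move=> y ym'; apply: mle_trans ym' lm.
- by rewrite mem_monomials_deg md.
- exact: mle_refl.
- by apply/negP => mm'; move: ne; rewrite (mle_eq lm mm') eqxx.
Qed.

(* Division by the leading terms: induction on the rank of the leading monomial. *)
Lemma stdX_span_ideal_add d : spans_mod J (stdX d) (fun p => p \is d.-homog).
Proof.
suff H n (p : S) : p \is d.-homog ->
    (forall m, m \in msupp p -> (mle_rank d m < n)%N) -> in_span_mod J (stdX d) p.
  move=> p Hp; apply: (H (size (monomials_deg s d)).+1) => // m _.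
  by rewrite ltnS count_size.
have idJ := ideal_add_is_ideal I f.
have span0 : in_span_mod J (stdX d) 0 := in_span_mod_ideal _ (ideal0 idJ).
elim: n p => [|n IH] p Hp Hsupp; have [->|pnz] := eqVneq p 0 => //.
  by have := Hsupp _ (lead_mnm_supp o pnz).
pose m := lead_mnm o p; have mp : m \in msupp p := lead_mnm_supp o pnz.
have md : mdeg m = d := dhomogP _ _ _ Hp _ mp.
have [q [qh qm qle qspan]] := reduction_step md.
rewrite -(subrK ((p@_m / q@_m) *: q) p).
apply: (in_span_modD idJ); last exact: in_span_modZ.
apply: IH; first by rewrite rpredB ?rpredZ.
move=> m' /(msupp_cancel_lead qm (@mle_lead_mnm _ _ o p) qle) /andP [le_m' ne_m'].
by apply: leq_trans (mle_rank_lt le_m' ne_m' md) _; rewrite -ltnS Hsupp.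
Qed.

Lemma zeros_size_le_std d : (size X + df <= d)%N -> (size V <= size (std d))%N.
Proof.
move=> Hd; have HdX : (size X <= d)%N by lia.
rewrite -(size_map (fun m => 'X_[m] : S)) -(size_map (dirac_form X d) V).
apply: (indep_mod_size_le (ideal_add_is_ideal I f) (@stdX_span_ideal_add d)).
  by move=> p; apply: (dirac_forms_dhomog HX HdX) => x /zeros_subset.
exact: dirac_forms_zeros_indep.
Qed.

End InitialIdeal.

Lemma nonincreasing_eventually_const (a : nat -> nat) D :
  (forall d, (D <= d)%N -> (a d.+1 <= a d)%N) ->
  exists D' c, forall d, (D' <= d)%N -> a d = c.
Proof.
move=> H; have mono d e : (D <= d)%N -> (d <= e)%N -> (a e <= a d)%N.
  move=> Dd /subnKC <-; elim: (e - d)%N => [|k IH]; first by rewrite addn0.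
  by rewrite addnS; apply: leq_trans IH; apply: H; apply: leq_trans Dd (leq_addr _ _).
suff: forall v d, (D <= d)%N -> (a d <= v)%N -> exists D' c, forall e, (D' <= e)%N -> a e = c.
  by apply; last exact: leqnn.
elim=> [|v IH] d Dd adv.
  exists d, 0%N => e de; apply/eqP; rewrite -leqn0; apply: leq_trans adv.
  exact: mono.
case: (excluded_middle_informative (exists e, (d <= e)%N /\ (a e < a d)%N)).
  move=> [e [de lt]]; apply: (IH e); first exact: leq_trans de.
  by rewrite -ltnS; apply: leq_trans adv.
move=> nex; exists d, (a d) => e de; apply/eqP; rewrite eqn_leq mono //=.
by rewrite leqNgt; apply/negP => lt; apply: nex; exists e.
Qed.

Section MonomialPowers.
Variable s : nat.

Lemma mdeg_mnm1n (j : 'I_s) a : mdeg (U_(j) *+ a)%MM = a.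
Proof. by rewrite mdegMn mdeg1 mul1n. Qed.

Lemma mnm1nE (j : 'I_s) a i : (U_(j) *+ a)%MM i = if j == i then a else 0%N.
Proof. by rewrite mulmnE mnm1E; case: (j == i); rewrite ?mul1n ?mul0n. Qed.

Lemma mdeg_le_max (m : 'X_{1..s}) j c : (forall k, k != j -> m k <= c)%N ->
  (mdeg m <= m j + s * c)%N.
Proof.
move=> H; rewrite mdegE (bigD1 j) //= leq_add2l.
rewrite -[X in (_ <= X * c)%N]card_ord -sum_nat_const.
rewrite [X in (_ <= X)%N](bigD1 j) //=; apply: leq_trans (leq_addl _ _).
by apply: leq_sum => k /H.
Qed.

End MonomialPowers.

Section InitialIdealDimension.
Variables (K : fieldType) (s : nat) (X : seq (point K s)) (o : monomial_order s).
Variable f : {mpoly K[s]}.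
Hypothesis HX : proj_finite_set X.
Local Notation S := {mpoly K[s]}.
Local Notation I := (vanishing_ideal X).
Local Notation M := (ideal_add (in_ideal o I) (in_poly o f)).
Local Notation V := [seq x : point K s <- X | f.@[x] == 0].
Local Notation N := (size X).
Local Notation std := (std X o f).

Lemma mpolyX_pair (j k : 'I_s) a b :
  ('X_[U_(j) *+ a + U_(k) *+ b] : S) = 'X_j ^+ a * 'X_k ^+ b.
Proof. by rewrite mpolyXD !mpolyXn. Qed.

Lemma mnm_pair_le (m : 'X_{1..s}) j k : j != k -> (N <= m j)%N -> (N <= m k)%N ->
  (U_(j) *+ N + U_(k) *+ N <= m)%MM.
Proof.
move=> jk hj hk; apply/mnm_lepP => i; rewrite mnmDE !mnm1nE.
case: (eqVneq j i) => [<-|ji]; first by rewrite eq_sym (negbTE jk) addn0.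
by case: eqP => [<-|]; rewrite add0n.
Qed.

(* Otherwise the [N + 1] monomials [t_j^a t_k^(N-a)] would all be standard. *)
Lemma initial_pair (j k : 'I_s) : j != k -> M 'X_[U_(j) *+ N + U_(k) *+ N].
Proof.
move=> jk; apply: NNPP => nM.
pose ma a := (U_(j) *+ a + U_(k) *+ (N - a))%MM.
have sub : {subset [seq ma a | a <- iota 0 N.+1] <= std N}.
  move=> m /mapP [a ai ->]; rewrite mem_iota add0n in ai.
  rewrite mem_std mdegD !mdeg_mnm1n subnKC ?eqxx /=; last by rewrite -ltnS.
  apply/in_initialP => Mma; apply: nM; apply: initial_monomial_mul Mma _.
  apply/mnm_lepP => i; rewrite !mnmDE !mnm1nE.
  case: (j == i); case: (k == i); rewrite ?addn0 ?add0n //; last exact: leq_subr.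
  by rewrite leq_add // ?leq_subr // -ltnS.
have un : uniq [seq ma a | a <- iota 0 N.+1].
  rewrite map_inj_in_uniq ?iota_uniq // => a b _ _ e.
  have := congr1 (fun m : 'X_{1..s} => m j) e; rewrite /ma !mnmDE !mnm1nE eqxx.
  by rewrite eq_sym (negbTE jk) !addn0.
have := uniq_leq_size un sub; rewrite size_map size_iota.
by move/leq_trans/(_ (std_size_le o f HX (leqnn N))); rewrite ltnn.
Qed.

Section PositiveDimension.
Hypothesis spos : (0 < s)%N.

Definition max_index (m : 'X_{1..s}) : 'I_s := [arg max_(i > Ordinal spos) m i].

Lemma max_indexP (m : 'X_{1..s}) i : (m i <= m (max_index m))%N.
Proof. by rewrite /max_index; case: arg_maxnP => // j _ H; apply: H. Qed.

Lemma std_max_index d (m : 'X_{1..s}) : (s * N + N <= d)%N -> m \in std d.+1 ->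
  (forall k, k != max_index m -> m k < N)%N /\ (N < m (max_index m))%N.
Proof.
move=> Hd; rewrite mem_std => /andP [/eqP md /in_initialP nM].
have small k : k != max_index m -> (m k < N)%N.
  move=> kj; rewrite ltnNge; apply/negP => hk; apply: nM.
  apply: initial_monomial_mul (initial_pair kj) _; rewrite eq_sym in kj.
  by rewrite addmC; apply: mnm_pair_le; rewrite // (leq_trans hk) // max_indexP.
split=> //; have := mdeg_le_max (j := max_index m) (c := N) (m := m).
by rewrite md => /(_ (fun k kj => ltnW (small k kj))); lia.
Qed.

(* Dividing a standard monomial by its variable of largest exponent is injective. *)
Lemma std_size_nonincreasing d : (s * N + N <= d)%N ->
  (size (std d.+1) <= size (std d))%N.
Proof.
move=> Hd; pose g m := (m - U_(max_index m))%MM.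
have gK (m : 'X_{1..s}) : (0 < m (max_index m))%N -> (g m + U_(max_index m))%MM = m.
  by move=> h; rewrite submK //; apply/mnm_lepP => i; rewrite mnm1E; case: eqP => [<-|].
have big_max m : m \in std d.+1 -> (N <= g m (max_index m))%N.
  move=> /(std_max_index Hd) [_ h].
  by rewrite mnmBE mnm1E eqxx subn1 -ltnS prednK ?(leq_trans _ h).
have sub : {subset [seq g m | m <- std d.+1] <= std d}.
  move=> m' /mapP [m ms ->]; have [_ hj] := std_max_index Hd ms.
  move: (ms); rewrite !mem_std => /andP [/eqP md /in_initialP nM].
  apply/andP; split.
    by move: md; rewrite -{1}(gK m) ?mdegD ?mdeg1 ?addn1 => [[->]|]; rewrite // (leq_trans _ hj).
  by apply/in_initialP => Mg; apply: nM; apply: initial_monomial_mul Mg _; exact: lem_subr.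
have inj : {in std d.+1 &, injective g}.
  move=> m1 m2 m1s m2s e.
  have [_ h1] := std_max_index Hd m1s; have [_ h2] := std_max_index Hd m2s.
  have e12 : max_index m1 = max_index m2.
    apply: NNPP => /eqP ne; have := sub _ (map_f g m1s).
    rewrite mem_std => /andP [_ /in_initialP []].
    apply: initial_monomial_mul (initial_pair ne) _.
    by apply: mnm_pair_le; rewrite ?big_max // e big_max.
  by rewrite -(gK m1) ?(leq_trans _ h1) // -(gK m2) ?(leq_trans _ h2) // e e12.
have un : uniq [seq g m | m <- std d.+1] by rewrite map_inj_in_uniq ?std_uniq.
by have := uniq_leq_size un sub; rewrite size_map.
Qed.

Lemma std_size_eventually_const : exists D c, forall d, (D <= d)%N -> size (std d) = c.
Proof.
apply: (nonincreasing_eventually_const (D := s * N + N)) => d.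
exact: std_size_nonincreasing.
Qed.

Lemma std_nil_of_powers e d : (forall j, M 'X_[U_(j) *+ e.+1]) -> (s * e < d)%N ->
  std d = [::].
Proof.
move=> Mpow lt_d; apply/eqP; rewrite -size_eq0 -leqn0 leqNgt; apply/negP => ne0.
have /(mem_nth 0%MM) := ne0; rewrite mem_std => /andP [/eqP md /in_initialP []].
set m := nth _ _ _ in md *.
case: (excluded_middle_informative (exists j, (e.+1 <= m j)%N)) => [[j hj]|small].
  apply: initial_monomial_mul (Mpow j) _; apply/mnm_lepP => i; rewrite mnm1nE.
  by case: eqP => [<-|].
suff : (mdeg m <= s * e)%N by rewrite md leqNgt lt_d.
rewrite mdegE -[X in (_ <= X * e)%N]card_ord -sum_nat_const; apply: leq_sum => i _.
by rewrite leqNgt; apply/negP => h; apply: small; exists i.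
Qed.

(* [P] contains [t_j^N t_k^N] for all [j != k]. *)
Lemma initial_prime_variables (P : S -> Prop) : is_prime_ideal P -> (forall g, M g -> P g) ->
  exists j : 'I_s, forall k, k != j -> P 'X_k.
Proof.
move=> HP MP.
case: (excluded_middle_informative (exists j : 'I_s, ~ P 'X_j)) => [[j nPj]|allP]; last first.
  by exists (Ordinal spos) => k _; apply: NNPP => nPk; apply: allP; exists k.
exists j => k kj; apply: NNPP => nPk.
have := MP _ (initial_pair kj); rewrite mpolyX_pair.
by case: (HP) => _ [_ Pm] /Pm [] /(prime_exp HP).
Qed.

Variable df : nat.
Hypotheses (Hf : f \is df.-homog) (fnz : f != 0).

Lemma initial_power_free : V != [::] -> exists j : 'I_s, forall e, ~ M 'X_[U_(j) *+ e].
Proof.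
move=> Vnz; apply: NNPP => nex.
have Hall (j : 'I_s) : exists e, M 'X_[U_(j) *+ e].
  by apply: NNPP => ne; apply: nex; exists j => e Me; apply: ne; exists e.
pose ej (j : 'I_s) := epsilon (inhabits 0%N) (fun e => M 'X_[U_(j) *+ e]).
have Hej j : M 'X_[U_(j) *+ ej j] := epsilon_spec _ (fun e => M 'X_[U_(j) *+ e]) (Hall j).
pose E := (\sum_(j < s) ej j)%N.
have ME j : M 'X_[U_(j) *+ E.+1].
  apply: initial_monomial_mul (Hej j) _; apply/mnm_lepP => i; rewrite !mnm1nE.
  case: (j == i) => //; rewrite /E (bigD1 j) //=; exact: leq_trans (leq_addr _ _) (leqnSn _).
pose d := (N + df + s * E.+1)%N.
have := zeros_size_le_std o HX Hf fnz (_ : N + df <= d)%N.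
rewrite (std_nil_of_powers ME) /= ?leqn0 ?size_eq0 ?(negbTE Vnz) // /d; lia.
Qed.

End PositiveDimension.
End InitialIdealDimension.

Section PolynomialIdeals.
Variable K : fieldType.
Implicit Types (Q : {poly K} -> Prop) (u r : {poly K}).

Lemma poly_min_size Q u : Q u -> u != 0 ->
  exists r, [/\ Q r, r != 0 & forall r', Q r' -> r' != 0 -> (size r <= size r')%N].
Proof.
move=> Qu nz.
pose b n := if excluded_middle_informative (exists r, [/\ Q r, r != 0 & size r = n])
            then true else false.
have bP n : reflect (exists r, [/\ Q r, r != 0 & size r = n]) (b n).
  by rewrite /b; case: excluded_middle_informative => h; constructor.
have exb : exists n, b n by exists (size u); apply/bP; exists u.
case: (ex_minnP exb) => n /bP [r [Qr rnz <-]] Hmin.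
by exists r; split=> // r' Qr' nz'; apply: Hmin; apply/bP; exists r'.
Qed.

Section Generator.
Variables (Q : {poly K} -> Prop) (r : {poly K}).
Hypotheses (QD : forall a c, Q a -> Q c -> Q (a + c)) (QM : forall a c, Q c -> Q (a * c)).
Hypotheses (Qr : Q r) (rnz : r != 0) (r_min : forall r', Q r' -> r' != 0 -> (size r <= size r')%N).

Lemma poly_ideal_generator q : Q q -> q = q %/ r * r.
Proof.
move=> Qq; have Qmod : Q (q %% r).
  have -> : q %% r = q + (- (q %/ r)) * r.
    by apply/eqP; rewrite eq_sym mulNr subr_eq addrC -divp_eq.
  by apply: QD => //; apply: QM.
have /eqP rq0 : q %% r == 0.
  by apply: contraT => nz; have := r_min Qmod nz; rewrite leqNgt ltn_modp rnz.
by rewrite {1}(divp_eq q r) rq0 addr0.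
Qed.

Lemma poly_ideal_generator_nonconst : ~ Q 1 -> (1 < size r)%N.
Proof.
move=> nQ1; rewrite ltnNge; apply/negP => hr.
have /size_poly1P [c cnz re] : size r == 1%N by rewrite eqn_leq hr lt0n size_poly_eq0.
apply: nQ1; have -> : (1 : {poly K}) = (c^-1)%:P * r by rewrite re -polyCM mulVf.
exact: QM.
Qed.

End Generator.

(* In K[t] the nonzero prime ideals are maximal. *)
Lemma poly_prime_maximal (Q1 Q2 : {poly K} -> Prop) :
  (forall a, Q1 a -> Q2 a) ->
  (forall a c, Q1 c -> Q1 (a * c)) -> (forall a c, Q1 (a * c) -> Q1 a \/ Q1 c) ->
  (forall a c, Q2 a -> Q2 c -> Q2 (a + c)) -> (forall a c, Q2 c -> Q2 (a * c)) ->
  ~ Q2 1 -> forall u, Q1 u -> u != 0 -> forall b, Q2 b -> Q1 b.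
Proof.
move=> Q12 Q1M Q1P Q2D Q2M nQ21 u Q1u unz b Q2b.
have [r [Q2r rnz rmin]] := poly_min_size (Q12 _ Q1u) unz.
have gen := poly_ideal_generator Q2D Q2M Q2r rnz rmin.
have r2 := poly_ideal_generator_nonconst Q2M Q2r rnz nQ21.
have [p [Q1p pnz pmin]] := poly_min_size Q1u unz.
have pE := gen _ (Q12 _ Q1p).
have := Q1P (p %/ r) r; rewrite -pE => /(_ Q1p) [Q1w|Q1r].
  have wnz : p %/ r != 0 by apply: contraNneq pnz => w0; rewrite pE w0 mul0r.
  have := pmin _ Q1w wnz; rewrite {1}pE size_mul //.
  case: (size r) r2 => // n r2.
  by rewrite addnS /= -[X in (_ <= X)%N]addn0 leq_add2l leqn0 => /eqP n0; rewrite n0 in r2.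
by rewrite (gen _ Q2b); apply: Q1M.
Qed.

End PolynomialIdeals.

Section KrullDimensionOne.
Variables (K : fieldType) (s : nat).
Local Notation S := {mpoly K[s]}.
Implicit Types (P J : S -> Prop) (x : 'I_s -> K).

(* For [x j != 0], these forms cut out the line through [x]. *)
Definition line_form x (j k : 'I_s) : S := 'X_k - (x k / x j) *: 'X_j.

Definition contains_line_forms P : Prop :=
  exists x j, x j != 0 /\ forall k, P (line_form x j k).

Lemma line_form_dhomog x j k : line_form x j k \is 1.-homog.
Proof. by apply: rpredB; [|apply: rpredZ]; apply: dhomogXU. Qed.

Lemma line_form_eval x j k : x j != 0 -> (line_form x j k).@[x] = 0.
Proof. by move=> xj; rewrite mevalB mevalZ !mevalXU mulfVK // subrr. Qed.

Definition poly_subst (j : 'I_s) : {poly K} -> S := horner_alg ('X_j : S).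
HB.instance Definition _ j := GRing.RMorphism.copy (poly_subst j) (poly_subst j).

(* The projection of [S] onto [K[t_j]] along the line through [x]. *)
Definition line_retract x j : S -> S := poly_subst j \o line_eval (fun k => x k / x j).
HB.instance Definition _ x j :=
  GRing.RMorphism.copy (line_retract x j) (poly_subst j \o line_eval (fun k => x k / x j)).

Lemma poly_substZ j c u : poly_subst j (c *: u) = c *: poly_subst j u.
Proof. by rewrite /poly_subst -mul_polyC rmorphM /= horner_algC alg_mpolyC mul_mpolyC. Qed.

Lemma line_retractZ x j c p : line_retract x j (c *: p) = c *: line_retract x j p.
Proof. by rewrite /line_retract /= line_evalZ poly_substZ. Qed.

Lemma line_retractX x j k : line_retract x j 'X_k = (x k / x j) *: 'X_j.
Proof.
by rewrite /line_retract /= line_evalX poly_substZ /poly_subst horner_algX.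
Qed.

Lemma line_retract_cong P x j : is_ideal P -> (forall k, P (line_form x j k)) ->
  forall p, P (p - line_retract x j p).
Proof.
move=> idP Hl p; rewrite {1 2}(mpolyE p) rmorph_sum /= -sumrB.
apply: ideal_sum => // m _; rewrite line_retractZ -scalerBr; apply: idealZ => //.
rewrite {1 2}mpolyXE_id rmorph_prod /=; apply: ideal_congP => // i.
by rewrite rmorphXn /=; apply: ideal_congX => //; rewrite line_retractX; apply: Hl.
Qed.

(* Pulling back along [poly_subst j] turns a chain of three primes over the
   line forms into a chain of two nonzero primes of [K[t_j]]. *)
Lemma no_prime_chain3 (P0 P1 P2 : S -> Prop) :
  is_prime_ideal P0 -> is_prime_ideal P1 -> is_prime_ideal P2 ->
  strict_incl P0 P1 -> strict_incl P1 P2 -> contains_line_forms P0 -> False.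
Proof.
move=> [HP0 _] [HP1 [nP11 PP1]] [HP2 [nP21 _]] [P01 [a [P1a nP0a]]] [P12 [a' [P2a' nP1a']]].
move=> [x [j [xj Hl]]]; have cg := line_retract_cong HP0 Hl.
pose sg := line_eval (fun k => x k / x j).
have retract_mem P p : is_ideal P -> (forall g, P0 g -> P g) -> P p ->
    P (poly_subst j (sg p)).
  move=> idP P0P Pp; have -> : poly_subst j (sg p) = p - (p - line_retract x j p).
    by rewrite opprB addrC subrK.
  by apply: idealB => //; apply: P0P.
apply: nP1a'; have -> : a' = (a' - line_retract x j a') + line_retract x j a' by rewrite subrK.
apply: idealD => //; first exact/P01.
apply: (poly_prime_maximal (Q1 := fun u => P1 (poly_subst j u))
          (Q2 := fun u => P2 (poly_subst j u)) _ _ _ _ _ _ (u := sg a)).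
- by move=> c /P12.
- by move=> c d Hd; rewrite rmorphM; apply: idealMl.
- by move=> c d; rewrite rmorphM => /PP1.
- by move=> c d Hc Hd; rewrite rmorphD; apply: idealD.
- by move=> c d Hd; rewrite rmorphM; apply: idealMl.
- by rewrite rmorph1.
- exact: retract_mem.
- apply/eqP => sa0; apply: nP0a; have := cg a.
  by rewrite /line_retract /= -/sg sa0 rmorph0 subr0.
- by apply: retract_mem => // g /P01 /P12.
Qed.

(* [line_ideal x] over [J] and [origin_ideal x] give a chain of length one. *)
Lemma krull_dim_eq1 J x j : x j != 0 -> (forall g, J g -> line_ideal x g) ->
  (forall P, is_prime_ideal P -> (forall g, J g -> P g) -> contains_line_forms P) ->
  krull_dim J = 1%N.
Proof.
move=> xj JI Hp; apply: krull_dim_unique; split.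
- exists [:: line_ideal x; origin_ideal x]; split=> //; split.
  + case=> [|[|i]] //= _; first by split=> //; apply: line_ideal_prime.
    split; first exact: origin_ideal_prime.
    by move=> a /JI; rewrite /origin_ideal /line_ideal => ->; rewrite horner0.
  + case=> //= _; split.
      by move=> a; rewrite /origin_ideal /line_ideal => ->; rewrite horner0.
    exists 'X_j; rewrite /origin_ideal /line_ideal line_evalX hornerZ hornerX mulr0.
    split=> //; apply/eqP; rewrite scaler_eq0 (negbTE xj) -size_poly_eq0 size_polyX //.
- move=> Ps [HPs HPs']; rewrite leqNgt; apply/negP => lt.
  have l1 : (1 < size Ps)%N := ltn_trans (ltnSn 1) lt.
  have [P0p P0J] := HPs 0%N (ltn_trans (ltnSn 0) l1).
  exact: (no_prime_chain3 P0p (HPs 1%N l1).1 (HPs 2%N lt).1 (HPs' 0%N l1) (HPs' 1%N lt)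
    (Hp _ P0p P0J)).
Qed.

End KrullDimensionOne.

Section Dimensions.
Variables (K : fieldType) (s : nat) (X : seq (point K s)).
Hypothesis HX : proj_finite_set X.
Local Notation S := {mpoly K[s]}.
Local Notation I := (vanishing_ideal X).

Lemma proj_finite_set_dim x : x \in X -> (0 < s)%N.
Proof. by move=> /(proj_point_nonzero HX) [k _]; apply: leq_ltn_trans (ltn_ord k). Qed.

Lemma vanishing_sub_line x : x \in X -> forall g, I g -> line_ideal x g.
Proof. by move=> xX g /vanishing_idealP; apply. Qed.

(* Otherwise [P] misses a linear form vanishing at each point of [X], hence
   misses their product, which lies in [I]. *)
Lemma prime_over_vanishing (P : S -> Prop) : is_prime_ideal P -> (forall g, I g -> P g) ->
  contains_line_forms P.
Proof.
move=> HP IP; apply: NNPP => nlines.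
pose Pr (x : point K s) (l : S) := [/\ l \is 1.-homog, l.@[x] = 0 & ~ P l].
have ex x : x \in X -> exists l, Pr x l.
  move=> xX; have [j xj] := proj_point_nonzero HX xX; apply: NNPP => nl.
  apply: nlines; exists x, j; split=> // k; apply: NNPP => nPk; apply: nl.
  by exists (line_form x j k); split; rewrite ?line_form_dhomog ?line_form_eval.
pose lf x := epsilon (inhabits 0) (Pr x).
have Hlf x : x \in X -> Pr x (lf x) by move=> /ex; apply: epsilon_spec.
have Iq : I (\prod_(x <- X) lf x).
  apply: (vanishing_ideal_dhomog (d := size X)).
    by apply: dhomog_prod_linear => x /Hlf [].
  move=> x xX; rewrite rmorph_prod /= (big_rem x xX) /=.
  by case: (Hlf x xX) => _ -> _; rewrite mul0r.
by have [x /Hlf [_ _]] := prime_prod HP (IP _ Iq).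
Qed.

Lemma krull_dim_vanishing x : x \in X -> krull_dim I = 1%N.
Proof.
move=> xX; have [j xj] := proj_point_nonzero HX xX.
apply: (krull_dim_eq1 xj (vanishing_sub_line xX)); exact: prime_over_vanishing.
Qed.

Variables (f : S) (df : nat).
Hypothesis Hf : f \is df.-homog.
Local Notation J := (ideal_add I f).
Local Notation V := [seq x : point K s <- X | f.@[x] == 0].

Lemma krull_dim_ideal_add x : x \in V -> krull_dim J = 1%N.
Proof.
rewrite mem_filter => /andP [/eqP fx xX].
have [j xj] := proj_point_nonzero HX xX.
apply: (krull_dim_eq1 xj).
  apply: ideal_add_min (line_ideal_prime x).1 (vanishing_sub_line xX) _.
  exact/(line_eval_dhomog_eq0 x Hf).
move=> P HP JP; apply: prime_over_vanishing => // g Ig; apply: JP; exact: ideal_add_l.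
Qed.

Lemma colon_vanishing_trivial : V = [::] -> forall h, colon I f h <-> I h.
Proof.
move=> V0 h; rewrite /colon; split=> [|Ih]; last first.
  by rewrite mulrC; exact: (idealMl (vanishing_ideal_is_ideal X) _ Ih).
move/vanishing_idealP => H; apply/vanishing_idealP => x xX.
have /eqP := H x xX; rewrite /line_ideal rmorphM mulf_eq0 => /orP [/eqP //|/eqP].
move/(line_eval_dhomog_eq0 x Hf) => fx.
have : x \in V by rewrite mem_filter fx eqxx.
by rewrite V0.
Qed.

Lemma zeros_size_lt : ~ I f -> (size V < size X)%N.
Proof.
move=> nIf; rewrite ltn_neqAle size_filter count_size andbT.
apply/eqP => e; apply: nIf; apply: (vanishing_ideal_dhomog Hf) => x xX.
have : all (fun x : point K s => f.@[x] == 0) X by rewrite all_count e.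
by move/allP/(_ x xX)/eqP.
Qed.

Lemma deg_vanishing_ideal x : x \in X -> deg I = (size X)%:R.
Proof.
move=> xX; apply: deg_krull_dim1 (krull_dim_vanishing xX) _.
by exists (size X) => d; apply: hilbert_vanishing_ideal.
Qed.

Lemma deg_ideal_add x : x \in V -> deg J = (size V)%:R.
Proof.
move=> xV; apply: deg_krull_dim1 (krull_dim_ideal_add xV) _.
by exists (size X + df)%N => d; apply: hilbert_ideal_add.
Qed.

Variable o : monomial_order s.
Hypothesis fnz : f != 0.
Local Notation M := (ideal_add (in_ideal o I) (in_poly o f)).

Definition unit_point (j : 'I_s) : 'I_s -> K := fun k => (k == j)%:R.

(* Every monomial of [M] involves a variable other than [t_j]. *)
Lemma initial_sub_line j : (forall e, ~ M 'X_[U_(j) *+ e]) ->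
  forall g, M g -> line_ideal (unit_point j) g.
Proof.
move=> noPow; have Mline b : M 'X_[b] -> line_ideal (unit_point j) 'X_[b].
  move=> Mb; apply/(line_eval_dhomog_eq0 _ (d := mdeg b)); first by rewrite dhomogX.
  rewrite mevalX; case: (excluded_middle_informative (exists i, i != j /\ b i != 0%N)).
    by move=> [i [ij bi]]; rewrite (bigD1 i) //= /unit_point (negbTE ij) expr0n (negbTE bi) mul0r.
  move=> H; case: (noPow (b j)); suff -> : (U_(j) *+ b j)%MM = b by [].
  apply/mnmP => i; rewrite mnm1nE; case: eqP => [<-//|/eqP ji].
  by apply: NNPP => bi; apply: H; exists i; split; [rewrite eq_sym | apply/eqP => /esym].
apply: ideal_add_min (line_ideal_prime _).1 _ (Mline _ (ideal_add_r _ _)).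
apply: gen_ideal_min (line_ideal_prime _).1 _ => g [g' [Ig' [nz ->]]].
exact/Mline/initial_lead.
Qed.

Lemma line_form_unit_point j k : line_form (unit_point j) j k = if k == j then 0 else 'X_k.
Proof.
rewrite /line_form /unit_point eqxx divr1; case: eqP => [->|_]; first by rewrite scale1r subrr.
by rewrite scale0r subr0.
Qed.

Lemma krull_dim_initial x : x \in V -> krull_dim M = 1%N.
Proof.
move=> xV; have spos := proj_finite_set_dim (zeros_subset xV).
have Vnz : V != [::] by apply: contraTneq xV => ->.
have [j Hj] := initial_power_free o HX spos Hf fnz Vnz.
apply: (krull_dim_eq1 (_ : unit_point j j != 0)); first by rewrite /unit_point eqxx oner_eq0.
  exact: initial_sub_line.
move=> P HP MP; have [j0 Hj0] := initial_prime_variables HX spos HP MP.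
exists (unit_point j0), j0; split; first by rewrite /unit_point eqxx oner_eq0.
move=> k; rewrite line_form_unit_point; case: eqP => [_|/eqP]; last exact: Hj0.
by case: HP => [[]].
Qed.

Lemma deg_initial_bounds x : x \in V ->
  exists c : nat, [/\ deg M = c%:R, (size V <= c)%N & (c <= size X)%N].
Proof.
move=> xV; have spos := proj_finite_set_dim (zeros_subset xV).
have [D [c Hc]] := std_size_eventually_const o f HX spos.
exists c; split.
- apply: deg_krull_dim1 (krull_dim_initial xV) _.
  by exists D => d Dd; rewrite hilbert_initial Hc.
- rewrite -(Hc (maxn D (size X + df))) ?leq_maxl //.
  by apply: (zeros_size_le_std o HX Hf fnz); rewrite leq_maxr.
- rewrite -(Hc (maxn D (size X))) ?leq_maxl //.
  by apply: (std_size_le o f HX); rewrite leq_maxr.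
Qed.

End Dimensions.


Unset Implicit Arguments.
Set Strict Implicit.

Theorem corollary4p3 (K : fieldType) (s : nat) (X : seq (@point K s))
    (o : monomial_order s) (f : {mpoly K[s]}) :
  proj_finite_set X ->
  f != 0 -> homogeneous f ->
  ~ (forall h, colon (vanishing_ideal X) f h <-> vanishing_ideal X h) ->
  [/\ (card_zeros X f)%:R = deg (ideal_add (vanishing_ideal X) f),
      deg (ideal_add (vanishing_ideal X) f)
        <= deg (ideal_add (in_ideal o (vanishing_ideal X)) (in_poly o f)),
      deg (ideal_add (in_ideal o (vanishing_ideal X)) (in_poly o f))
        <= deg (vanishing_ideal X)
    & ~ vanishing_ideal X f ->
      deg (ideal_add (vanishing_ideal X) f) < deg (vanishing_ideal X)].
Proof.
move=> HX fnz [df Hf] nontrivial.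
have [x xV] : exists x, x \in [seq x : point K s <- X | f.@[x] == 0].
  case E: [seq x : point K s <- X | f.@[x] == 0] => [|x V]; last by exists x; rewrite mem_head.
  by case: nontrivial; apply: colon_vanishing_trivial Hf E.
have [c [-> cV cX]] := deg_initial_bounds HX Hf o fnz xV.
rewrite (deg_ideal_add HX Hf xV) (deg_vanishing_ideal HX (zeros_subset xV)).
rewrite /card_zeros -size_filter !ler_nat ltr_nat; split=> //.
exact: zeros_size_lt Hf.
Qed.
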